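(* Let $\Sigma$ be a language consisting only of constant symbols, and let $\mathcal{T}_\Sigma$ be the family of all complete theories in $\Sigma$. If $\Sigma$ consists of $n\in\omega$ symbols, then ${\rm RS}(\mathcal{T}_\Sigma)=1$ and ${\rm ds}(\mathcal{T}_\Sigma)=P(n)$, where $P(n)$ is the number of partitions of an $n$-element set. If $\Sigma$ has infinitely many symbols, then ${\rm RS}(\mathcal{T}_\Sigma)=\infty$.
   Context: Theories are complete consistent first-order theories; structures have nonempty universes. $\mathcal{T}_\Sigma$ is the family of complete theories of all $\Sigma$-structures, where each constant symbol $c$ may be regarded as a unary predicate $R_c$ interpreted as $\{c\}$. For a family $\mathcal{T}$ of theories and a sentence $\varphi$ of its language, $\mathcal{T}_\varphi=\{T\in\mathcal{T}\mid\varphi\in T\}$. The rank ${\rm RS}$ of a family is defined as follows: ${\rm RS}(\emptyset)=-1$; ${\rm RS}(\mathcal{T})=0$ for finite nonempty $\mathcal{T}$; ${\rm RS}(\mathcal{T})\ge 1$ for infinite $\mathcal{T}$; for $\alpha=\beta+1$, ${\rm RS}(\mathcal{T})\ge\alpha$ iff there are pairwise inconsistent sentences $\varphi_n$, $n\in\omega$, of the language of $\mathcal{T}$ with ${\rm RS}(\mathcal{T}_{\varphi_n})\ge\beta$ for all $n$; for limit $\alpha$, ${\rm RS}(\mathcal{T})\ge\alpha$ iff ${\rm RS}(\mathcal{T})\ge\beta$ for all $\beta<\alpha$; ${\rm RS}(\mathcal{T})=\alpha$ iff ${\rm RS}(\mathcal{T})\ge\alpha$ and not ${\rm RS}(\mathcal{T})\ge\alpha+1$;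 ${\rm RS}(\mathcal{T})=\infty$ if ${\rm RS}(\mathcal{T})\ge\alpha$ for every ordinal $\alpha$. If ${\rm RS}(\mathcal{T})=\alpha$ is an ordinal $\ge0$, the degree ${\rm ds}(\mathcal{T})$ is the maximal number of pairwise inconsistent sentences $\varphi_i$ with ${\rm RS}(\mathcal{T}_{\varphi_i})=\alpha$. *)

From mathcomp Require Import all_boot.
From Stdlib Require List.

Set Implicit Arguments.
Unset Strict Implicit.
Unset Printing Implicit Defensive.

Inductive term (C : Type) : Type :=
| TVar : nat -> term C
| TConst : C -> term C.

Inductive form (C : Type) : Type :=
| FEq  : term C -> term C -> form C
| FNeg : form C -> form C
| FAnd : form C -> form C -> form C
| FEx  : nat -> form C -> form C.

Arguments TVar {C}.
Arguments FEq {C}.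
Arguments FNeg {C}.
Arguments FAnd {C}.
Arguments FEx {C}.

Definition fv_term (C : Type) (t : term C) : seq nat :=
  match t with TVar x => [:: x] | TConst _ => [::] end.

Fixpoint fv (C : Type) (f : form C) : seq nat :=
  match f with
  | FEq t1 t2 => fv_term t1 ++ fv_term t2
  | FNeg g => fv g
  | FAnd g h => fv g ++ fv h
  | FEx x g => filter (fun y => y != x) (fv g)
  end.

Definition sentence (C : Type) (f : form C) : Prop := fv f = [::].

(* Sigma-structures: nonempty universe + interpretation of the constants *)
Record structure (C : Type) : Type := Structure {
  carrier :> Type;
  some_elt : carrier;
  interp : C -> carrier
}.

Definition upd (M : Type) (a : nat -> M) (x : nat) (m : M) : nat -> M :=
  fun y => if y == x then m else a y.

Definition eval_term (C : Type) (M : structure C) (a : nat -> M) (t : term C)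
  : M :=
  match t with TVar x => a x | TConst c => interp M c end.

Fixpoint holds (C : Type) (M : structure C) (a : nat -> M) (f : form C)
  : Prop :=
  match f with
  | FEq t1 t2 => eval_term a t1 = eval_term a t2
  | FNeg g => ~ holds a g
  | FAnd g h => holds a g /\ holds a h
  | FEx x g => exists m : M, holds (upd a x m) g
  end.

(* M |= f  (for sentences this does not depend on the assignment) *)
Definition models (C : Type) (M : structure C) (f : form C) : Prop :=
  forall a : nat -> M, holds a f.

Definition theory (C : Type) := form C -> Prop.
Definition family (C : Type) := theory C -> Prop.

Definition Th (C : Type) (M : structure C) : theory C :=
  fun f => sentence f /\ models M f.

Definition T_Sigma (C : Type) : family C :=
  fun T => exists M : structure C, T = Th M.

Definition subfam (C : Type) (fam : family C) (phi : form C) : family C :=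
  fun T => fam T /\ T phi.

Definition fam_nonempty (C : Type) (fam : family C) : Prop :=
  exists T, fam T.

Definition fam_finite (C : Type) (fam : family C) : Prop :=
  exists l : list (theory C), forall T, fam T -> List.In T l.

Definition inconsistent2 (C : Type) (phi psi : form C) : Prop :=
  forall M : structure C, ~ (models M phi /\ models M psi).

(* Ordinals, represented as elements of well-ordered types.           *)

Definition well_order (A : Type) (lt : A -> A -> Prop) : Prop :=
  well_founded lt /\
  (forall x y z, lt x y -> lt y z -> lt x z) /\
  (forall x y, lt x y \/ x = y \/ lt y x).

Definition ord_is_zero (A : Type) (lt : A -> A -> Prop) (a : A) : Prop :=
  forall b, ~ lt b a.

Definition ord_is_succ (A : Type) (lt : A -> A -> Prop) (b a : A) : Prop :=
  lt b a /\ ~ (exists c, lt b c /\ lt c a).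

Definition ord_is_one (A : Type) (lt : A -> A -> Prop) (a : A) : Prop :=
  exists b, ord_is_zero lt b /\ ord_is_succ lt b a.

Definition ord_is_limit (A : Type) (lt : A -> A -> Prop) (a : A) : Prop :=
  ~ ord_is_zero lt a /\ ~ (exists b, ord_is_succ lt b a).

(* RSge lt a fam  <->  RS(fam) >= a   (for a in a well-ordered type);
   inductive definition following the clauses of the definition of RS:
   RS >= 0 iff nonempty (RS(empty) = -1, finite nonempty has RS 0),
   RS >= 1 iff infinite,
   RS >= b+1 (b >= 1) iff there are pairwise inconsistent sentences phi_n
       with RS(fam_{phi_n}) >= b for all n,
   RS >= a (a limit) iff RS >= b for all b < a. *)
Inductive RSge (C A : Type) (lt : A -> A -> Prop) : A -> family C -> Prop :=
| RSge_zero a fam :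
    ord_is_zero lt a -> fam_nonempty fam -> RSge lt a fam
| RSge_one a fam :
    ord_is_one lt a -> ~ fam_finite fam -> RSge lt a fam
| RSge_succ a b fam :
    ord_is_succ lt b a -> ~ ord_is_zero lt b ->
    (exists phi : nat -> form C,
        (forall n, sentence (phi n)) /\
        (forall n m, n <> m -> inconsistent2 (phi n) (phi m)) /\
        (forall n, RSge lt b (subfam fam (phi n)))) ->
    RSge lt a fam
| RSge_lim a fam :
    ord_is_limit lt a -> (forall b, lt b a -> RSge lt b fam) -> RSge lt a fam.

(* RS(fam) >= k for a finite ordinal k (ordinals < omega are the naturals) *)
Definition RSge_nat (C : Type) (k : nat) (fam : family C) : Prop :=
  RSge (fun m n : nat => (m < n)%N) k fam.

Definition RS_eq_nat (C : Type) (k : nat) (fam : family C) : Prop :=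
  RSge_nat k fam /\ ~ RSge_nat k.+1 fam.

Definition RS_infty (C : Type) (fam : family C) : Prop :=
  forall (A : Type) (lt : A -> A -> Prop), well_order lt ->
    forall a : A, RSge lt a fam.

Definition ds_eq_nat (C : Type) (k : nat) (fam : family C) (d : nat) : Prop :=
  (exists phi : 'I_d -> form C,
      (forall i, sentence (phi i)) /\
      (forall i j, i <> j -> inconsistent2 (phi i) (phi j)) /\
      (forall i, RS_eq_nat k (subfam fam (phi i)))) /\
  (forall (m : nat) (phi : 'I_m -> form C),
      (forall i, sentence (phi i)) ->
      (forall i j, i <> j -> inconsistent2 (phi i) (phi j)) ->
      (forall i, RS_eq_nat k (subfam fam (phi i))) ->
      (m <= d)%N).

Definition num_partitions (n : nat) : nat :=
  #|[set P : {set {set 'I_n}} | partition P [set: 'I_n]]|.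

(* Finite language: the complete theory of a structure is determined by the partition
   of the constants into classes of equal interpretation and by the size of the universe,
   and an Ehrenfeucht-Fraisse argument shows that a sentence of quantifier depth q cannot
   distinguish sizes beyond |Sigma| + q.  Structures of bounded size have only finitely
   many theories, so a sentence with infinitely many completions has a model of size at
   least |Sigma| + q, and then also an infinite model inducing the same partition.  Two
   such sentences whose models induce the same partition are therefore consistent; this
   bounds by P(n) the number of pairwise inconsistent sentences with infinitely many
   completions, which excludes RS >= 2, while the sentences describing the partitions,
   each true in structures of every size, give ds = P(n).

   Infinite language: fix distinct constants c_0, c_1, ....  A satisfiable sentence psi
   that only speaks about c_0, ..., c_(N-1) is compatible with each of the pairwise
   inconsistent sentences "c_N = c_(N+k+1) and c_N differs from c_(N+1), ..., c_(N+k)",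
   and each conjunction is again of the same kind, so well-founded induction gives
   RS >= alpha for every ordinal alpha. *)

From Pilot Require Import Defs.
From mathcomp Require Import all_boot zify.
From Stdlib Require List.
From Stdlib Require Import ClassicalEpsilon FunctionalExtensionality PropExtensionality.

Set Implicit Arguments.
Unset Strict Implicit.
Unset Printing Implicit Defensive.

Lemma InP (T : eqType) (x : T) (s : seq T) : reflect (List.In x s) (x \in s).
Proof.
elim: s => [|y s IH]; first by constructor.
by rewrite inE; apply: (iffP orP) => [[/eqP->|/IH Hx]|[->|/IH Hx]]; [left|right|left|right].
Qed.

Section Formulas.
Variable C : Type.

Definition ftrue : form C := FEx 0 (FEq (TVar 0) (TVar 0)).

Definition bigAnd (T : Type) (F : T -> form C) (s : seq T) : form C :=
  foldr (fun x g => FAnd (F x) g) ftrue s.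

Definition exs (l : seq nat) (g : form C) : form C := foldr FEx g l.

Lemma holds_ftrue (M : structure C) (a : nat -> M) : holds a ftrue.
Proof. by exists (a 0). Qed.

Lemma holds_bigAnd (T : eqType) (F : T -> form C) s (M : structure C) (a : nat -> M) :
  holds a (bigAnd F s) <-> {in s, forall x, holds a (F x)}.
Proof.
elim: s => [|y s IH] /=; first by split=> // _; exact: holds_ftrue.
rewrite IH; split=> [[Fy Fs] x|Fs].
  by rewrite inE => /predU1P [->|/Fs].
by split=> [|x sx]; apply: Fs; rewrite inE ?eqxx ?sx ?orbT.
Qed.

Lemma holds_exs (l : seq nat) (g : form C) (M : structure C) (a : nat -> M) :
  holds a (exs l g) <-> exists2 a' : nat -> M, {in [predC l], a' =1 a} & holds a' g.
Proof.
elim: l a => [|x l IH] a /=.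
  split=> [ga|[a' a'a ga']]; first by exists a.
  by have -> : a = a' by apply: functional_extensionality => y; rewrite a'a.
split=> [[m /IH [a' a'a ga']]|[a' a'a ga']].
  exists a' => // y; rewrite inE negb_or => /andP [yx yl].
  by rewrite a'a // /upd (negbTE yx).
exists (a' x); apply/IH; exists a' => // y yl; rewrite /upd.
by case: eqP => [->|/eqP yx] //; apply: a'a; rewrite inE negb_or yx.
Qed.

Lemma models_const (M : structure C) (f : form C) (P : Prop) :
  (forall a : nat -> M, holds a f <-> P) -> models M f <-> P.
Proof. by move=> fP; split=> [/(_ (fun=> some_elt M))/fP|Pf a] //; apply/fP. Qed.

Lemma models_and (M : structure C) (f g : form C) :
  models M (FAnd f g) <-> models M f /\ models M g.
Proof. by split=> [fg|[Mf Mg] a]; [split=> a; case: (fg a) | split]. Qed.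

Lemma sentence_of_fv_sub (f : form C) : {subset fv f <= [::]} -> sentence f.
Proof. by rewrite /sentence; case: (fv f) => // y s /(_ y (mem_head y s)). Qed.

Lemma fv_bigAnd_sub (T : eqType) (F : T -> form C) s (V : seq nat) :
  {in s, forall x, {subset fv (F x) <= V}} -> {subset fv (bigAnd F s) <= V}.
Proof.
elim: s => [|x s IH] //= FV y; rewrite mem_cat => /orP [yF|ys].
  by apply: (FV x) yF; exact: mem_head.
by apply: IH ys => z sz; apply: FV; rewrite inE sz orbT.
Qed.

Lemma fv_exs (l : seq nat) (g : form C) : fv (exs l g) = [seq y <- fv g | y \notin l].
Proof.
elim: l => [|x l IH] /=; first by rewrite filter_predT.
by rewrite IH -filter_predI; apply: eq_filter => y; rewrite /= inE negb_or.
Qed.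

Lemma sentence_exs (l : seq nat) (g : form C) : {subset fv g <= l} -> sentence (exs l g).
Proof.
move=> gl; rewrite /sentence fv_exs -(filter_pred0 (fv g)).
by apply: eq_in_filter => y /gl ->.
Qed.

Lemma sentence_and (f g : form C) : sentence (FAnd f g) <-> sentence f /\ sentence g.
Proof. by rewrite /sentence /=; split=> [|[-> ->]] //; case: (fv f) => //; case: (fv g). Qed.

Lemma ftrue_sentence : sentence ftrue.
Proof. by []. Qed.

Lemma Th_and (M : structure C) (f g : form C) : Th M (FAnd f g) <-> Th M f /\ Th M g.
Proof. by rewrite /Th sentence_and models_and; tauto. Qed.

End Formulas.

Arguments ftrue {C}.

Section Families.
Variable C : Type.

Lemma subfam_T_Sigma_and (psi phi : form C) :
  subfam (subfam (@T_Sigma C) psi) phi = subfam (@T_Sigma C) (FAnd psi phi).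
Proof.
apply: functional_extensionality => T; apply: propositional_extensionality.
split=> [[[[M ->] M_psi] M_phi]|[[M ->] /Th_and [M_psi M_phi]]].
  by split; [exists M | exact/Th_and].
by split; [split; [exists M|] |].
Qed.

Lemma subfam_T_Sigma_ftrue : subfam (@T_Sigma C) ftrue = @T_Sigma C.
Proof.
apply: functional_extensionality => T; apply: propositional_extensionality.
split=> [[]//|[M ->]]; split; first by exists M.
by split=> [|a]; [exact: ftrue_sentence | exact: holds_ftrue].
Qed.

Lemma fam_finite_sub (F G : Defs.family C) :
  (forall T, F T -> G T) -> fam_finite G -> fam_finite F.
Proof. by move=> FG [l Gl]; exists l => T /FG /Gl. Qed.

Lemma fam_finite_image (X : finType) (h : X -> theory C) (F : Defs.family C) :
  (forall T, F T -> exists x, T = h x) -> fam_finite F.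
Proof.
move=> Fh; exists (map h (enum X)) => T /Fh [x ->].
by apply: List.in_map; apply/InP; rewrite mem_enum.
Qed.

Lemma not_finite_of_injective (F : Defs.family C) (f : nat -> theory C) :
  injective f -> (forall k, F (f k)) -> ~ fam_finite F.
Proof.
move=> f_inj Ff [l Hl].
pose s := List.map f (List.seq 0 (size l).+1).
have nodup : List.NoDup s.
  apply: List.NoDup_map_NoDup_ForallPairs; last exact: List.seq_NoDup.
  by move=> ? ? _ _; exact: f_inj.
have incl : List.incl s l by move=> x /List.in_map_iff [k [<- _]]; exact: Hl.
have := List.NoDup_incl_length nodup incl.
by rewrite List.length_map List.length_seq => /leP; exact: negP (negbT (ltnn _)).
Qed.

Lemma not_finite_of_inconsistent (F : Defs.family C) (phi : nat -> form C) :
  (forall T, F T -> T_Sigma T) -> (forall k l, k <> l -> inconsistent2 (phi k) (phi l)) ->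
  (forall k, fam_nonempty (subfam F (phi k))) -> ~ fam_finite F.
Proof.
move=> F_Sigma incons nonempty.
have [T HT] := choice (fun k T => subfam F (phi k) T) nonempty.
apply: (not_finite_of_injective (f := T)) => [k l Tkl|k]; last by case: (HT k).
apply: NNPP => kl; have [_ Tk] := HT k; have [FTl Tl] := HT l.
have [M ETl] := F_Sigma _ FTl; rewrite Tkl ETl in Tk; rewrite ETl in Tl.
by case: Tk Tl => [_ Mk] [_ Ml]; apply: (incons k l kl M).
Qed.

Lemma infinite_RSge_nat1 (F : Defs.family C) : ~ fam_finite F -> RSge_nat 1 F.
Proof. by move=> inf; apply: RSge_one => //; exists 0; split=> [b|]; [|split=> // -[c]]; lia. Qed.

Lemma ord_is_zero_nat (b : nat) : ord_is_zero (fun m n : nat => m < n) b -> b = 0.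
Proof. by case: b => // b /(_ 0 isT). Qed.

Lemma RSge_nat1_infinite (F : Defs.family C) : RSge_nat 1 F -> ~ fam_finite F.
Proof.
move=> H; inversion H as [a F' zero| |a b F' [b1 _] b_pos|a F' [_ not_succ]]; subst => // _.
- exact: zero 0 isT.
- by apply: b_pos => c; lia.
- by apply: not_succ; exists 0; split=> // -[c [? ?]]; lia.
Qed.

Lemma RSge_nat2_inv (F : Defs.family C) : RSge_nat 2 F ->
  exists phi : nat -> form C, [/\ forall k, sentence (phi k),
    forall k l, k <> l -> inconsistent2 (phi k) (phi l) &
    forall k, RSge_nat 1 (subfam F (phi k))].
Proof.
move=> H; inversion H as [a F' zero|a F' [b [b0 [_ no_mid]]] _
  |a b F' [b2 no_mid] b_pos [phi [? [? RS_b]]]|a F' [_ not_succ]]; subst.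
- by case: (zero 0 isT).
- by case: no_mid; exists 1; rewrite (ord_is_zero_nat b0).
- have b1 : b = 1 by case: b b2 b_pos {no_mid RS_b} => [|[|b]] // _ []; move=> c; rewrite ltn0.
  by rewrite b1 in RS_b; exists phi.
- by case: not_succ; exists 1; split=> // -[c [? ?]]; lia.
Qed.
End Families.

Definition card_ge (X : Type) (k : nat) : Prop := exists f : 'I_k -> X, injective f.

Lemma card_ge0 (X : Type) : card_ge X 0.
Proof.
have f : 'I_0 -> X by case=> m; rewrite ltn0.
by exists f => i; have := ltn_ord i; rewrite ltn0.
Qed.

Lemma card_ge_inj (X Y : Type) (g : X -> Y) k : injective g -> card_ge X k -> card_ge Y k.
Proof. by move=> g_inj [f f_inj]; exists (g \o f); exact: inj_comp. Qed.

Lemma card_geW (X : Type) k l : l <= k -> card_ge X k -> card_ge X l.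
Proof.
move=> lk [f f_inj]; exists (f \o widen_ord lk).
by apply: inj_comp f_inj _ => i j /(congr1 val) /= /val_inj.
Qed.

Lemma card_geS (X Y : Type) (g : X -> Y) (y : Y) k :
  injective g -> (forall x, g x <> y) -> card_ge X k -> card_ge Y k.+1.
Proof.
move=> g_inj gy [f f_inj].
exists (fun i : 'I_k.+1 => if unlift ord_max i is Some j then g (f j) else y).
move=> i j; case: unliftP => [i' ->|->]; case: unliftP => [j' ->|->] //.
- by move/g_inj/f_inj->.
- by move/gy.
- by move/esym/gy.
Qed.

Lemma card_ge_fin (F : finType) k : card_ge F k <-> k <= #|F|.
Proof.
split=> [[f /leq_card]|kF]; first by rewrite card_ord.
exists (fun i => enum_val (widen_ord kF i)).
by apply: inj_comp (@enum_val_inj _ _) _ => i j /(congr1 val) /= /val_inj.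
Qed.

Lemma card_ge_surj (F : finType) (X : Type) (f : F -> X) k :
  (forall x, exists u, f u = x) -> card_ge X k -> k <= #|F|.
Proof.
move=> f_onto Xk; have [g fg] := choice (fun x u => f u = x) f_onto.
by apply/card_ge_fin; apply: card_ge_inj Xk; exact: can_inj fg.
Qed.

Lemma exact_card (X : Type) B : ~ card_ge X B ->
  exists2 s, s < B & card_ge X s /\ ~ card_ge X s.+1.
Proof.
elim: B => [|B IH] notB; first by case: notB; exact: card_ge0.
have [XB|notXB] := classic (card_ge X B); first by exists B.
by have [s sB Hs] := IH notXB; exists s => //; exact: ltnW.
Qed.

Section AtLeast.
Variable C : Type.

Definition distinct_pairs (m : nat) : seq (nat * nat) :=
  [seq p <- [seq (i, j) | i <- iota 0 m, j <- iota 0 m] | p.1 != p.2].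

Definition at_least (m : nat) : form C :=
  exs (iota 0 m) (bigAnd (fun p => FNeg (FEq (TVar p.1) (TVar p.2))) (distinct_pairs m)).

Lemma mem_distinct_pairs m p : (p \in distinct_pairs m) = [&& p.1 < m, p.2 < m & p.1 != p.2].
Proof.
case: p => i j; rewrite mem_filter andbC andbA /=; congr (_ && _).
apply/allpairsP/andP => [[[i' j'] [/= i'm j'm [-> ->]]]|[im jm]].
  by move: i'm j'm; rewrite !mem_iota.
by exists (i, j); rewrite !mem_iota.
Qed.

Lemma at_least_sentence m : sentence (at_least m).
Proof.
apply: sentence_exs; apply: fv_bigAnd_sub => p; rewrite mem_distinct_pairs /= => /and3P [? ? _] y.
by rewrite !inE !mem_iota => /orP [] /eqP ->.
Qed.

Lemma models_at_least (M : structure C) m : models M (at_least m) <-> card_ge M m.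
Proof.
apply: models_const => a; rewrite holds_exs; split=> [[a' _ /holds_bigAnd a'_inj]|[f f_inj]].
  exists (fun i : 'I_m => a' i) => i j E; apply/val_inj; apply: NNPP => ij.
  by apply: (a'_inj (val i, val j) _ E); rewrite mem_distinct_pairs !ltn_ord; apply/eqP.
exists (fun y => if insub y is Some i then f i else a y) => [y|].
  by rewrite !inE mem_iota /= => ym; rewrite insubN // -leqNgt.
apply/holds_bigAnd => -[i j]; rewrite mem_distinct_pairs /= => /and3P [im jm ij].
by rewrite !insubT => /f_inj /(congr1 val) /= /eqP; rewrite (negbTE ij).
Qed.

End AtLeast.

Arguments at_least {C}.

Section InfiniteLanguage.
Variable C : Type.
Hypothesis C_infinite : ~ exists l : seq C, forall c, List.In c l.

Lemma exists_fresh (l : seq C) : exists c, ~ List.In c l.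
Proof.
apply: NNPP => none; apply: C_infinite; exists l => c.
by apply: NNPP => cl; apply: none; exists c.
Qed.

Definition fresh (l : seq C) : C :=
  proj1_sig (constructive_indefinite_description _ (exists_fresh l)).

Lemma fresh_notin (l : seq C) : ~ List.In (fresh l) l.
Proof. exact: proj2_sig (constructive_indefinite_description _ (exists_fresh l)). Qed.

Fixpoint fresh_seq (k : nat) : seq C :=
  if k is k'.+1 then fresh (fresh_seq k') :: fresh_seq k' else [::].

Definition cst (k : nat) : C := fresh (fresh_seq k).

Lemma cst_in_fresh_seq k m : k < m -> List.In (cst k) (fresh_seq m).
Proof.
elim: m => // m IH; rewrite ltnS leq_eqVlt => /predU1P [->|/IH km]; by [left | right].
Qed.

Lemma cst_neq k m : k < m -> cst k <> cst m.
Proof.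
move=> km E; have := @fresh_notin (fresh_seq m); rewrite -/(cst m) -E; apply.
exact: cst_in_fresh_seq.
Qed.

Lemma cst_inj : injective cst.
Proof. by move=> k m E; case: (ltngtP k m) => // /cst_neq; [case/(_ E) | case/(_ (esym E))]. Qed.

Definition cst_index (c : C) : option nat :=
  match excluded_middle_informative (exists k, cst k = c) with
  | left H => Some (proj1_sig (constructive_indefinite_description _ H))
  | right _ => None
  end.

Lemma cst_indexK : pcancel cst cst_index.
Proof.
move=> k; rewrite /cst_index; case: excluded_middle_informative => [H|[]]; last by exists k.
by case: constructive_indefinite_description => j /= /cst_inj ->.
Qed.

Definition override (i : C -> nat) (N : nat) (g : nat -> nat) (c : C) : nat :=
  if cst_index c is Some k then (if N <= k then g k else i c) else i c.

Lemma override_cst i N g k : override i N g (cst k) = if N <= k then g k else i (cst k).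
Proof. by rewrite /override cst_indexK. Qed.

Definition nat_structure (i : C -> nat) : structure C := @Structure C nat 0 i.

(* A semantic rendering of "psi only speaks about cst 0, ..., cst N.-1"; structures on
   [nat] suffice, as all the witnesses below are of this form. *)
Definition determined_below (N : nat) (psi : form C) : Prop :=
  forall i1 i2 : C -> nat, (forall k, k < N -> i1 (cst k) = i2 (cst k)) ->
    models (nat_structure i1) psi -> models (nat_structure i2) psi.

Definition admissible (N : nat) (psi : form C) : Prop :=
  [/\ sentence psi, determined_below N psi & exists i, models (nat_structure i) psi].

Definition eq_cst (k l : nat) : form C := FEq (TConst (cst k)) (TConst (cst l)).

Definition first_match (N k : nat) : form C :=
  FAnd (eq_cst N (N + k.+1)) (bigAnd (fun j => FNeg (eq_cst N (N + j.+1))) (iota 0 k)).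

Lemma models_first_match (M : structure C) N k :
  models M (first_match N k) <->
  interp M (cst N) = interp M (cst (N + k.+1)) /\
  forall j, j < k -> interp M (cst N) <> interp M (cst (N + j.+1)).
Proof.
apply: models_const => a /=; rewrite holds_bigAnd.
split=> -[E H]; split=> // j; first by move=> jk; apply: H; rewrite mem_iota.
by rewrite mem_iota; exact: H.
Qed.

Lemma first_match_sentence N k : sentence (first_match N k).
Proof. by apply/sentence_of_fv_sub/fv_bigAnd_sub. Qed.

Lemma first_match_inconsistent N k l : k <> l -> inconsistent2 (first_match N k) (first_match N l).
Proof.
move=> kl M [/models_first_match [Ek Hk] /models_first_match [El Hl]].
by case: (ltngtP k l) => [/Hl|/Hk|] //; rewrite ?Ek ?El.
Qed.

Lemma admissible_first_match N psi k :
  admissible N psi -> admissible (N + k.+2) (FAnd psi (first_match N k)).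
Proof.
case=> psi_sent psi_det [i Mi]; split.
- by apply/sentence_and; split=> //; exact: first_match_sentence.
- move=> i1 i2 Ei /models_and [M1psi /models_first_match /= [E1 H1]].
  apply/models_and; split; first by apply: psi_det M1psi => j jN; apply: Ei; lia.
  apply/models_first_match => /=; rewrite -!Ei; try lia.
  by split=> // j jk; rewrite -Ei; [exact: H1 | lia].
- pose g j := if (j == N) || (j == N + k.+1) then 0 else 1.
  exists (override i N g); apply/models_and; split.
    by apply: psi_det Mi => j jN; rewrite override_cst leqNgt jN.
  apply/models_first_match => /=; rewrite !override_cst !leq_addr leqnn /g eqxx eqxx orbT.
  split=> // j jk; rewrite override_cst leq_addr.
  by have -> : (N + j.+1 == N) || (N + j.+1 == N + k.+1) = false by apply/negbTE; lia.
Qed.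

Lemma admissible_nonempty N psi :
  admissible N psi -> fam_nonempty (subfam (@T_Sigma C) psi).
Proof.
by case=> psi_sent _ [i Mi]; exists (Th (nat_structure i)); split; [exists (nat_structure i)|].
Qed.

Lemma RSge_admissible (A : Type) (lt : A -> A -> Prop) : well_founded lt ->
  forall a N psi, admissible N psi -> RSge lt a (subfam (@T_Sigma C) psi).
Proof.
move=> wf a; elim/(well_founded_ind wf): a => a IH N psi adm.
have [a0|a_pos] := classic (ord_is_zero lt a); first exact: RSge_zero a0 (admissible_nonempty adm).
have [[b ab]|no_pred] := classic (exists b, ord_is_succ lt b a); last first.
  by apply: RSge_lim => [|b ba]; [split | exact: IH ba _ _ adm].
have [b0|b_pos] := classic (ord_is_zero lt b).
  apply: RSge_one; first by exists b.
  apply: (not_finite_of_inconsistent (phi := first_match N)) => [T []|k l|k] //.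
    exact: first_match_inconsistent.
  by rewrite subfam_T_Sigma_and; apply/admissible_nonempty/admissible_first_match.
apply: (RSge_succ ab b_pos); exists (first_match N); split; first exact: first_match_sentence.
split=> [k l|k]; first exact: first_match_inconsistent.
by rewrite subfam_T_Sigma_and; apply: IH (proj1 ab) _ _ (admissible_first_match k adm).
Qed.

Lemma RS_infty_T_Sigma : RS_infty (@T_Sigma C).
Proof.
move=> A lt [wf _] a; rewrite -subfam_T_Sigma_ftrue; apply: RSge_admissible wf a 0 _ _.
split=> [|i1 i2 _ //|]; first exact: ftrue_sentence.
by exists (fun=> 0) => b; exact: holds_ftrue.
Qed.

End InfiniteLanguage.

Section Transfer.
Variable C : finType.

Definition same_kernel (M N : structure C) : Prop :=
  forall c1 c2 : C, interp M c1 = interp M c2 <-> interp N c1 = interp N c2.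

Definition card_agree (M N : structure C) (B : nat) : Prop :=
  forall k, k <= B -> card_ge M k <-> card_ge N k.

Definition term_over (V : seq nat) (t : term C) : bool :=
  if t is TVar y then y \in V else true.

Definition partial_iso (M N : structure C) (V : seq nat) (a : nat -> M) (b : nat -> N) : Prop :=
  forall t1 t2, term_over V t1 -> term_over V t2 ->
    eval_term a t1 = eval_term a t2 <-> eval_term b t1 = eval_term b t2.

Fixpoint qdepth (f : form C) : nat :=
  match f with
  | FEq _ _ => 0
  | FNeg g => qdepth g
  | FAnd g h => maxn (qdepth g) (qdepth h)
  | FEx _ g => (qdepth g).+1
  end.

Lemma card_agree_sym (M N : structure C) B : card_agree M N B -> card_agree N M B.
Proof. by move=> agree k kB; rewrite agree. Qed.

Lemma card_agreeW (M N : structure C) B B' : B' <= B -> card_agree M N B -> card_agree M N B'.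
Proof. by move=> BB' agree k kB'; apply: agree; exact: leq_trans BB'. Qed.

Lemma partial_iso_sym (M N : structure C) V (a : nat -> M) (b : nat -> N) :
  partial_iso V a b -> partial_iso V b a.
Proof. by move=> iso t1 t2 V1 V2; rewrite iso. Qed.

Lemma term_overP V t : {subset fv_term t <= V} -> term_over V t.
Proof. by case: t => //= y; apply; exact: mem_head. Qed.

Definition subst_var (x : nat) (t0 t : term C) : term C :=
  if t is TVar y then (if y == x then t0 else t) else t.

Lemma eval_subst_var (M : structure C) (a : nat -> M) x t0 t :
  eval_term (upd a x (eval_term a t0)) t = eval_term a (subst_var x t0 t).
Proof. by case: t => //= y; rewrite /upd; case: eqP. Qed.

Lemma term_over_subst_var V x t0 t :
  term_over V t0 -> term_over (x :: V) t -> term_over V (subst_var x t0 t).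
Proof. by case: t => //= y Vt0; rewrite inE; case: eqP. Qed.

Lemma term_over_cons V x t : term_over (x :: V) t ->
  t = TVar x \/ term_over V t /\
    forall (M : structure C) (a : nat -> M) m, eval_term (upd a x m) t = eval_term a t.
Proof. by case: t => [y|c] /=; [rewrite inE /upd; case: eqP => [->|]; [left|right] | right]. Qed.

Definition term_of (V : seq nat) (u : 'I_(size V) + C) : term C :=
  match u with inl i => TVar (nth 0 V i) | inr c => TConst c end.

Lemma term_of_onto V t : term_over V t -> exists u : 'I_(size V) + C, term_of u = t.
Proof.
case: t => [y|c] /= Vy; last by exists (inr c).
have yV : index y V < size V by rewrite index_mem.
by exists (inl (Ordinal yV)); rewrite /= nth_index.
Qed.

Lemma partial_iso_upd_term (M N : structure C) V (a : nat -> M) (b : nat -> N) x t0 :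
  term_over V t0 -> partial_iso V a b ->
  partial_iso (x :: V) (upd a x (eval_term a t0)) (upd b x (eval_term b t0)).
Proof.
move=> Vt0 iso t1 t2 V1 V2; rewrite !eval_subst_var.
by apply: iso; exact: term_over_subst_var.
Qed.

Lemma partial_iso_upd_fresh (M N : structure C) V (a : nat -> M) (b : nat -> N) x m m' :
  partial_iso V a b ->
  (forall t, term_over V t -> eval_term a t <> m) ->
  (forall t, term_over V t -> eval_term b t <> m') ->
  partial_iso (x :: V) (upd a x m) (upd b x m').
Proof.
move=> iso m_fresh m'_fresh t1 t2.
have upd_x (X : structure C) (e : nat -> X) y : eval_term (upd e x y) (TVar x) = y.
  by rewrite /= /upd eqxx.
case/term_over_cons=> [->|[V1 E1]]; case/term_over_cons=> [->|[V2 E2]]; rewrite ?upd_x ?E1 ?E2 //.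
- by split=> E; [case: (m_fresh t2) | case: (m'_fresh t2)].
- by split=> E; [case: (m_fresh t1) | case: (m'_fresh t1)].
- exact: iso.
Qed.

(* Otherwise every element of [N] is named by one of the [size V + #|C|] terms over [V],
   and transporting names injects [N] into [M] avoiding [m]: [M] would have one more
   element than [N]. *)
Lemma exists_fresh_value (M N : structure C) V (a : nat -> M) (b : nat -> N) (m : M) :
  partial_iso V a b -> card_agree M N (size V + #|C| + 1) ->
  (forall t, term_over V t -> eval_term a t <> m) ->
  exists m' : N, forall t, term_over V t -> eval_term b t <> m'.
Proof.
move=> iso agree m_fresh; apply: NNPP => no_fresh.
have named y : exists t, term_over V t /\ eval_term b t = y.
  by apply: NNPP => not_named; apply: no_fresh; exists y => t Vt E; apply: not_named; exists t.
have [tm Htm] := choice _ named.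
have N_small : ~ card_ge N (size V + #|C|).+1.
  have onto y : exists u : 'I_(size V) + C, eval_term b (term_of u) = y.
    by have [Vy <-] := Htm y; have [u <-] := term_of_onto Vy; exists u.
  by move/(card_ge_surj onto); rewrite card_sum card_ord ltnn.
have [s s_le [Ns notNs1]] := exact_card N_small.
apply: notNs1; apply/(agree s.+1); first by rewrite addn1.
apply: (card_geS (g := fun y => eval_term a (tm y))) Ns => [y1 y2 E|y].
  by case: (Htm y1) (Htm y2) => [V1 <-] [V2 <-]; apply/(iso _ _ V1 V2).
by apply: m_fresh; case: (Htm y).
Qed.

Lemma partial_iso_extend (M N : structure C) V (a : nat -> M) (b : nat -> N) x (m : M) :
  partial_iso V a b -> card_agree M N (size V + #|C| + 1) ->
  exists m' : N, partial_iso (x :: V) (upd a x m) (upd b x m').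
Proof.
move=> iso agree.
have [[t0 [Vt0 <-]]|not_named] := classic (exists t0, term_over V t0 /\ eval_term a t0 = m).
  by exists (eval_term b t0); apply: partial_iso_upd_term.
have m_fresh t : term_over V t -> eval_term a t <> m by move=> Vt E; apply: not_named; exists t.
have [m' m'_fresh] := exists_fresh_value iso agree m_fresh.
by exists m'; apply: partial_iso_upd_fresh.
Qed.

Lemma holds_transfer (f : form C) (M N : structure C) V (a : nat -> M) (b : nat -> N) :
  {subset fv f <= V} -> partial_iso V a b -> card_agree M N (size V + #|C| + qdepth f) ->
  holds a f <-> holds b f.
Proof.
elim: f M N V a b => [t1 t2|g IH|g IHg h IHh|x g IH] M N V a b /= fV iso agree.
- by apply: iso; apply: term_overP => y y_t; apply: fV; rewrite mem_cat y_t ?orbT.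
- by rewrite (IH M N V a b).
- have fVg : {subset fv g <= V} by move=> y y_g; apply: fV; rewrite mem_cat y_g.
  have fVh : {subset fv h <= V} by move=> y y_h; apply: fV; rewrite mem_cat y_h orbT.
  rewrite (IHg M N V a b fVg iso (card_agreeW _ agree)) ?leq_add2l ?leq_maxl //.
  by rewrite (IHh M N V a b fVh iso (card_agreeW _ agree)) ?leq_add2l ?leq_maxr.
- have fV' : {subset fv g <= x :: V}.
    by move=> y y_g; rewrite inE; case: eqP => //= /eqP yx; apply: fV; rewrite mem_filter yx.
  have agree' : card_agree M N (size (x :: V) + #|C| + qdepth g).
    by apply: card_agreeW agree; rewrite /= !addSn addnS.
  have agree1 : card_agree M N (size V + #|C| + 1) by apply: card_agreeW agree; rewrite leq_add2l.
  split=> [[m gm]|[m' gm']].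
    have [m' iso'] := partial_iso_extend x m iso agree1.
    by exists m'; apply/(IH M N (x :: V) _ _ fV' iso' agree').
  have [m iso'] := partial_iso_extend x m' (partial_iso_sym iso) (card_agree_sym agree1).
  by exists m; apply/(IH M N (x :: V) _ _ fV' (partial_iso_sym iso') agree').
Qed.

Lemma same_kernel_sym (M N : structure C) : same_kernel M N -> same_kernel N M.
Proof. by move=> ker c1 c2; rewrite ker. Qed.

Lemma models_transfer (f : form C) (M N : structure C) :
  sentence f -> same_kernel M N -> card_agree M N (#|C| + qdepth f) -> models M f -> models N f.
Proof.
move=> f_sent ker agree Mf b.
have iso : partial_iso [::] (fun=> some_elt M) b by move=> [y|c1] [z|c2] //= _ _; exact: ker.
by apply/(holds_transfer _ iso agree) => [y|]; [rewrite f_sent | exact: Mf].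
Qed.

Lemma Th_eq (M N : structure C) :
  same_kernel M N -> (forall k, card_ge M k <-> card_ge N k) -> Th M = Th N.
Proof.
move=> ker card; apply: functional_extensionality => f; apply: propositional_extensionality.
have agree : card_agree M N (#|C| + qdepth f) by move=> k _.
split=> -[f_sent Mf]; split=> //; apply: models_transfer Mf => //.
- exact: same_kernel_sym.
- exact: card_agree_sym.
Qed.

End Transfer.

Section FiniteLanguage.
Variable C : finType.

Definition partitions : {set {set {set C}}} := [set P | partition P [set: C]].

Definition pad (M : structure C) : structure C :=
  @Structure C (M + nat)%type (inl (some_elt M)) (fun c => inl (interp M c)).

Lemma same_kernel_pad (M N : structure C) : same_kernel M N -> same_kernel M (pad N).
Proof. by move=> ker c1 c2 /=; split=> [/ker->|[/ker]]. Qed.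

Lemma card_agree_pad (M N : structure C) B : card_ge M B -> card_agree M (pad N) B.
Proof.
move=> MB k kB; split=> _; last exact: card_geW MB.
by exists (fun i => inr (val i)) => i j [] /val_inj.
Qed.

Definition ker_rel (M : structure C) : rel C :=
  fun c1 c2 => if excluded_middle_informative (interp M c1 = interp M c2) then true else false.

Lemma ker_relP (M : structure C) c1 c2 : reflect (interp M c1 = interp M c2) (ker_rel M c1 c2).
Proof. by rewrite /ker_rel; case: excluded_middle_informative; constructor. Qed.

Lemma ker_rel_equiv (M : structure C) : {in [set: C] & &, equivalence_rel (ker_rel M)}.
Proof.
move=> c1 c2 c3 _ _ _; split; first exact/ker_relP.
by move/ker_relP=> E; apply/ker_relP/ker_relP; rewrite E.
Qed.

Definition ker_partition (M : structure C) : {set {set C}} :=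
  equivalence_partition (ker_rel M) [set: C].

Lemma ker_partition_partition (M : structure C) : partition (ker_partition M) [set: C].
Proof. exact: equivalence_partitionP (ker_rel_equiv M). Qed.

Lemma mem_pblock_ker (M : structure C) c1 c2 :
  (c2 \in pblock (ker_partition M) c1) = ker_rel M c1 c2.
Proof. by rewrite (pblock_equivalence_partition (ker_rel_equiv M)) ?inE. Qed.

Lemma same_kernel_of_ker_partition (M N : structure C) :
  ker_partition M = ker_partition N -> same_kernel M N.
Proof.
move=> E c1 c2; split=> /ker_relP.
  by rewrite -mem_pblock_ker E mem_pblock_ker => /ker_relP.
by rewrite -mem_pblock_ker -E mem_pblock_ker => /ker_relP.
Qed.

Lemma consistent_of_ker_partition (f1 f2 : form C) (M1 M2 : structure C) :
  sentence f1 -> sentence f2 ->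
  models M1 f1 -> card_ge M1 (#|C| + qdepth f1) ->
  models M2 f2 -> card_ge M2 (#|C| + qdepth f2) ->
  ker_partition M1 = ker_partition M2 -> ~ inconsistent2 f1 f2.
Proof.
move=> f1_sent f2_sent M1f1 M1_big M2f2 M2_big E incons; apply: (incons (pad M1)); split.
  by apply: models_transfer M1f1 => //; [exact: same_kernel_pad | exact: card_agree_pad].
apply: models_transfer M2f2 => //; last exact: card_agree_pad.
by apply: same_kernel_pad; apply: same_kernel_of_ker_partition.
Qed.

(* Indexed by a finite type, so that the theories of structures with fewer than [B]
   elements form a finite family; [inord] truncates the values of [g]. *)
Definition small_structure (B : nat) (s : 'I_B) (g : {ffun C -> 'I_B}) : structure C :=
  @Structure C 'I_s.+1 ord0 (fun c => inord (g c)).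

Lemma Th_small (M : structure C) B : ~ card_ge M B ->
  exists sg : 'I_B * {ffun C -> 'I_B}, Th M = Th (small_structure sg.1 sg.2).
Proof.
case/exact_card=> s sB [[f f_inj] notMs1].
have f_onto y : exists i, f i = y.
  apply: NNPP => not_hit; apply: notMs1.
  apply: (card_geS (g := f) (y := y)) => // [i fi|]; first by apply: not_hit; exists i.
  by apply/card_ge_fin; rewrite card_ord.
case: s sB f f_inj f_onto notMs1 => [|s] sB f f_inj f_onto _.
  by have [[]] := f_onto (some_elt M).
have [h fh] := choice _ f_onto.
have h_inj : injective h := can_inj fh.
have sB' : s < B := ltnW sB.
exists (Ordinal sB', [ffun c => widen_ord sB' (h (interp M c))]).
apply: Th_eq => [c1 c2|k] /=.
  by rewrite !ffunE !inord_val; split=> [->|/h_inj].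
by split; [apply: card_ge_inj h_inj | apply: card_ge_inj f_inj].
Qed.

Lemma infinite_big_model (f : form C) B :
  ~ fam_finite (subfam (@T_Sigma C) f) -> exists M : structure C, models M f /\ card_ge M B.
Proof.
move=> inf; apply: NNPP => none; apply: inf.
pose small (sg : 'I_B * {ffun C -> 'I_B}) := Th (small_structure sg.1 sg.2).
apply: (fam_finite_image (h := small)).
by move=> T [[M ->] [_ Mf]]; apply: Th_small => MB; apply: none; exists M.
Qed.

Lemma inconsistent_infinite_le m (phi : 'I_m -> form C) :
  (forall i, sentence (phi i)) -> (forall i j, i <> j -> inconsistent2 (phi i) (phi j)) ->
  (forall i, ~ fam_finite (subfam (@T_Sigma C) (phi i))) ->
  m <= #|partitions|.
Proof.
move=> sent incons inf.
have [M HM] := choice (fun i M => models M (phi i) /\ card_ge M (#|C| + qdepth (phi i)))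
  (fun i => infinite_big_model _ (inf i)).
have ker_inj : injective (ker_partition \o M).
  move=> i j E; apply: NNPP => ij; case: (HM i) (HM j) => [Mi Mi_big] [Mj Mj_big].
  exact: consistent_of_ker_partition (sent i) (sent j) Mi Mi_big Mj Mj_big E (incons i j ij).
rewrite -[m]card_ord -(card_imset _ ker_inj); apply: subset_leq_card.
by apply/subsetP => _ /imsetP [i _ ->]; rewrite inE; exact: ker_partition_partition.
Qed.

Lemma not_RSge_nat2 (F : Defs.family C) : (forall T, F T -> T_Sigma T) -> ~ RSge_nat 2 F.
Proof.
move=> F_Sigma /RSge_nat2_inv [phi [sent incons RS1]].
suff : #|partitions| < #|partitions| by rewrite ltnn.
apply: (@inconsistent_infinite_le _ (fun i : 'I_#|partitions|.+1 => phi i)) => [i|i j ij|i].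
- exact: sent.
- by apply: incons => /val_inj.
- apply: contra_not (RSge_nat1_infinite (RS1 i)); apply: fam_finite_sub => T [FT phiT].
  by split=> //; exact: F_Sigma.
Qed.

Definition ker_sentence (P : {set {set C}}) : form C :=
  bigAnd (fun c : C * C => let e := FEq (TConst c.1) (TConst c.2) in
                          if c.2 \in pblock P c.1 then e else FNeg e) (enum {: C * C}).

Lemma ker_sentence_sentence P : sentence (ker_sentence P).
Proof. by apply/sentence_of_fv_sub/fv_bigAnd_sub => c _ y /=; case: (c.2 \in _). Qed.

Lemma models_ker_sentence (M : structure C) P :
  models M (ker_sentence P) <->
  forall c1 c2, interp M c1 = interp M c2 <-> c2 \in pblock P c1.
Proof.
apply: models_const => a; rewrite holds_bigAnd; split=> [H c1 c2|H [c1 c2] _].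
  by have := H (c1, c2) (mem_enum _ _); rewrite /=; case: ifP.
by rewrite /=; case: ifP => c12; [apply/H | move/H; rewrite c12].
Qed.

Lemma ker_partition_of_models (M : structure C) P :
  partition P [set: C] -> models M (ker_sentence P) -> ker_partition M = P.
Proof.
move=> partP /models_ker_sentence MP; rewrite -(equivalence_partition_pblock partP).
congr equivalence_partition; apply: functional_extensionality => c1.
by apply: functional_extensionality => c2; apply/ker_relP/idP => /MP.
Qed.

Definition block_structure (P : {set {set C}}) (k : nat) : structure C :=
  @Structure C ({set C} + 'I_k.+1)%type (inr ord0) (fun c => inl (pblock P c)).

Lemma block_structure_ker P k :
  partition P [set: C] -> models (block_structure P k) (ker_sentence P).
Proof.
case/and3P=> /eqP cover_P triv_P _; apply/models_ker_sentence => c1 c2 /=.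
rewrite -eq_pblock ?cover_P ?inE //; split=> [[->]|/eqP->] //.
Qed.

Lemma card_ge_block_structure P k m : card_ge (block_structure P k) m <-> m <= #|{set C}| + k.+1.
Proof. by rewrite card_ge_fin card_sum card_ord. Qed.

Lemma Th_block_structure_inj P : injective (fun k => Th (block_structure P k)).
Proof.
suff ge k l : Th (block_structure P k) = Th (block_structure P l) -> l <= k.
  by move=> k l E; apply/eqP; rewrite eqn_leq !ge.
move=> E; have : Th (block_structure P l) (at_least (#|{set C}| + l.+1)).
  by split; [exact: at_least_sentence | apply/models_at_least/card_ge_block_structure].
by rewrite -E => -[_ /models_at_least/card_ge_block_structure]; rewrite leq_add2l.
Qed.

Lemma subfam_ker_sentence_infinite P :
  partition P [set: C] -> ~ fam_finite (subfam (@T_Sigma C) (ker_sentence P)).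
Proof.
move=> partP; apply: (not_finite_of_injective (@Th_block_structure_inj P)) => k.
split; first by exists (block_structure P k).
by split; [exact: ker_sentence_sentence | exact: block_structure_ker].
Qed.

Lemma RS_T_Sigma_fin : RS_eq_nat 1 (@T_Sigma C).
Proof.
split; last exact: not_RSge_nat2.
apply/infinite_RSge_nat1/(not_finite_of_injective (@Th_block_structure_inj set0)) => k.
by exists (block_structure set0 k).
Qed.

Lemma ds_T_Sigma_fin : ds_eq_nat 1 (@T_Sigma C) #|partitions|.
Proof.
split=> [|m phi sent incons RS]; last first.
  by apply: inconsistent_infinite_le => // i; apply: RSge_nat1_infinite; case: (RS i).
have partP (i : 'I_#|partitions|) : partition (enum_val i) [set: C].
  by have := enum_valP i; rewrite inE.
exists (fun i => ker_sentence (enum_val i)); split=> [i|]; first exact: ker_sentence_sentence.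
split=> [i j ij M [Mi Mj]|i].
  apply/ij/enum_val_inj.
  by rewrite -(ker_partition_of_models (partP i) Mi) (ker_partition_of_models (partP j) Mj).
split; last by apply: not_RSge_nat2 => T [].
exact/infinite_RSge_nat1/subfam_ker_sentence_infinite/partP.
Qed.

End FiniteLanguage.

Theorem proposition2p4 :
  (forall n : nat,
     RS_eq_nat 1 (@T_Sigma 'I_n) /\
     ds_eq_nat 1 (@T_Sigma 'I_n) (num_partitions n)) /\
  (forall C : Type,
     ~ (exists l : list C, forall c : C, List.In c l) ->
     RS_infty (@T_Sigma C)).
Proof.
split=> [n|C C_infinite]; last exact: RS_infty_T_Sigma.
by split; [exact: RS_T_Sigma_fin | exact: ds_T_Sigma_fin].
Qed.
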